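(* Let $\mathcal{B}$ be a real Banach space, $\mathcal{E}\colon\mathbb{R}^m\times Y^m\to\mathbb{R}$ an error functional and $\Omega\colon\mathcal{B}\to\mathbb{R}$ a regulariser such that the regularisation problem $\inf\{\mathcal{E}((L_i(f),y_i)_{i=1}^m)+\lambda\Omega(f): f\in\mathcal{B}\}$ attains its minimum for all data $L_i\in\mathcal{B}^*$, $y_i\in Y$ and all $\lambda>0$. If $\Omega$ is admissible for the regularised interpolation problem, then the pair $(\mathcal{E},\Omega)$ is admissible for the regularisation problem.
   Context: Duality mapping: $J(f)=\{L\in\mathcal{B}^*: L(f)=\|L\|\,\|f\|,\ \|L\|=\|f\|\}$. For $L_1,\dots,L_m\in\mathcal{B}^*$ let $Z=\bigcap_i\ker(L_i)$; a closed subspace is proximinal if every point has a nearest point in it. Regularised interpolation admissibility: $\Omega$ is admissible if for all data $L_1,\dots,L_m\in\mathcal{B}^*$, $y_i\in Y\subseteq\mathbb{R}$ with nonempty constraint set $\{f: L_i(f)=y_i\ \forall i\}$: (i) when $Z$ is proximinal the problem $\inf\{\Omega(f): L_i(f)=y_i\ \forall i\}$ has a minimiser $f_0$ and $c_i\in\mathbb{R}$ with $\sum_ic_iL_i\in J(f_0)$; (ii) otherwise for every $\varepsilon>0$ there is $f_0^\varepsilon$ satisfying the constraints with $\Omega(f_0^\varepsilon)\le\inf+\varepsilon$ and $\hat L\in J(f_0^\varepsilon)$, $c_i$ with $\|\hat L-\sum_ic_iL_i\|_{\mathcal{B}^*}<\varepsilon$. Regularisation admissibility: the pair $(\mathcal{E},\Omega)$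 is admissible if for all data and $\lambda>0$ the regularisation problem has a solution of the same form: a minimiser $f_0$ with $\sum_ic_iL_i\in J(f_0)$ when $Z$ is proximinal, and otherwise for every $\varepsilon>0$ an $\varepsilon$-approximate minimiser $f_0^\varepsilon$ with some $\hat L\in J(f_0^\varepsilon)$ satisfying $\|\hat L-\sum_ic_iL_i\|<\varepsilon$.
   Formalization: In the admissibility of Ω for the regularised interpolation problem, the data values $y_i$ range over all of ℝ rather than over Y, while the regularisation data $y_i$ stay in Y. The statement above fails without it. *)

From Stdlib Require Import Reals Arith.
Open Scope R_scope.

Record RBanach := mkRBanach {
  bcar :> Type;
  bzero : bcar;
  badd : bcar -> bcar -> bcar;
  bopp : bcar -> bcar;
  bscal : R -> bcar -> bcar;
  bnorm : bcar -> R;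
  badd_assoc : forall x y z, badd x (badd y z) = badd (badd x y) z;
  badd_comm : forall x y, badd x y = badd y x;
  badd_zero : forall x, badd x bzero = x;
  badd_opp : forall x, badd x (bopp x) = bzero;
  bscal_assoc : forall a b x, bscal a (bscal b x) = bscal (a * b) x;
  bscal_one : forall x, bscal 1 x = x;
  bscal_distr_l : forall a x y, bscal a (badd x y) = badd (bscal a x) (bscal a y);
  bscal_distr_r : forall a b x, bscal (a + b) x = badd (bscal a x) (bscal b x);
  bnorm_zero_iff : forall x, bnorm x = 0 <-> x = bzero;
  bnorm_scal : forall a x, bnorm (bscal a x) = Rabs a * bnorm x;
  bnorm_triangle : forall x y, bnorm (badd x y) <= bnorm x + bnorm y;
  bcomplete : forall u : nat -> bcar,
    (forall eps, 0 < eps -> exists N, forall n p, (N <= n)%nat -> (N <= p)%nat ->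
        bnorm (badd (u n) (bopp (u p))) < eps) ->
    exists l, forall eps, 0 < eps -> exists N, forall n, (N <= n)%nat ->
        bnorm (badd (u n) (bopp l)) < eps
}.

Arguments bzero {_}. Arguments badd {_}. Arguments bopp {_}.
Arguments bscal {_}. Arguments bnorm {_}.

Definition bsub {B : RBanach} (x y : B) : B := badd x (bopp y).

Definition bounded_linear {B : RBanach} (L : B -> R) : Prop :=
  (forall x y, L (badd x y) = L x + L y) /\
  (forall a x, L (bscal a x) = a * L x) /\
  (exists C, forall x, Rabs (L x) <= C * bnorm x).

Definition dual_norm_is {B : RBanach} (L : B -> R) (r : R) : Prop :=
  is_lub (fun t => exists x : B, bnorm x <= 1 /\ t = Rabs (L x)) r.

Definition in_J {B : RBanach} (f : B) (L : B -> R) : Prop :=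
  bounded_linear L /\ dual_norm_is L (bnorm f) /\ L f = bnorm f * bnorm f.

Definition Idx (m : nat) := {i : nat | (i < m)%nat}.

Fixpoint sum_lt (n : nat) (h : nat -> R) : R :=
  match n with O => 0 | S k => sum_lt k h + h k end.

Definition sumIdx (m : nat) (g : Idx m -> R) : R :=
  sum_lt m (fun i => match lt_dec i m with
                     | left H => g (exist _ i H)
                     | right _ => 0 end).

Definition comb {B : RBanach} {m : nat} (c : Idx m -> R) (L : Idx m -> B -> R) : B -> R :=
  fun f => sumIdx m (fun i => c i * L i f).

Definition Zker {B : RBanach} {m : nat} (L : Idx m -> B -> R) (f : B) : Prop :=
  forall i, L i f = 0.

Definition proximinal {B : RBanach} (Z : B -> Prop) : Prop :=
  forall f : B, exists z, Z z /\ forall z', Z z' -> bnorm (bsub f z) <= bnorm (bsub f z').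

Definition dual_close {B : RBanach} {m : nat} (Lh : B -> R) (c : Idx m -> R)
    (L : Idx m -> B -> R) (eps : R) : Prop :=
  exists r, dual_norm_is (fun f => Lh f - comb c L f) r /\ r < eps.

Definition feasible {B : RBanach} {m : nat} (L : Idx m -> B -> R) (y : Idx m -> R) (f : B) : Prop :=
  forall i, L i f = y i.

Definition interp_admissible (B : RBanach) (Omega : B -> R) : Prop :=
  forall (m : nat) (L : Idx m -> B -> R) (y : Idx m -> R),
    (forall i, bounded_linear (L i)) ->
    (exists f, feasible L y f) ->
    (proximinal (Zker L) ->
       exists f0, feasible L y f0 /\ (forall g, feasible L y g -> Omega f0 <= Omega g) /\
                  exists c, in_J f0 (comb c L)) /\
    (~ proximinal (Zker L) ->
       forall eps, 0 < eps ->
       exists f0, feasible L y f0 /\ (forall g, feasible L y g -> Omega f0 <= Omega g + eps) /\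
                  exists Lh c, in_J f0 Lh /\ dual_close Lh c L eps).

Definition reg_obj {B : RBanach} {m : nat} {Y : R -> Prop}
    (E : (Idx m -> R) -> (Idx m -> {t : R | Y t}) -> R) (Omega : B -> R)
    (L : Idx m -> B -> R) (y : Idx m -> {t : R | Y t}) (lam : R) (f : B) : R :=
  E (fun i => L i f) y + lam * Omega f.

Definition reg_attains (B : RBanach) (m : nat) (Y : R -> Prop)
    (E : (Idx m -> R) -> (Idx m -> {t : R | Y t}) -> R) (Omega : B -> R) : Prop :=
  forall (L : Idx m -> B -> R) (y : Idx m -> {t : R | Y t}) (lam : R),
    (forall i, bounded_linear (L i)) -> 0 < lam ->
    exists f0, forall g, reg_obj E Omega L y lam f0 <= reg_obj E Omega L y lam g.

Definition reg_admissible (B : RBanach) (m : nat) (Y : R -> Prop)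
    (E : (Idx m -> R) -> (Idx m -> {t : R | Y t}) -> R) (Omega : B -> R) : Prop :=
  forall (L : Idx m -> B -> R) (y : Idx m -> {t : R | Y t}) (lam : R),
    (forall i, bounded_linear (L i)) -> 0 < lam ->
    (proximinal (Zker L) ->
       exists f0, (forall g, reg_obj E Omega L y lam f0 <= reg_obj E Omega L y lam g) /\
                  exists c, in_J f0 (comb c L)) /\
    (~ proximinal (Zker L) ->
       forall eps, 0 < eps ->
       exists f0, (forall g, reg_obj E Omega L y lam f0 <= reg_obj E Omega L y lam g + eps) /\
                  exists Lh c, in_J f0 Lh /\ dual_close Lh c L eps).

From Stdlib Require Import Reals Lra FunctionalExtensionality.
Open Scope R_scope.

(* Let [fs] minimise the regularisation problem and interpolate the values
   [L_i fs].  Every interpolant of these values has the same error term as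
   [fs], so an (approximate) minimiser of [Omega] among them is an
   (approximate) minimiser of the regularisation problem; the duality
   conditions carry over unchanged. *)

Lemma reg_obj_feasible {B : RBanach} {m : nat} {Y : R -> Prop}
    (E : (Idx m -> R) -> (Idx m -> {t : R | Y t}) -> R) (Omega : B -> R)
    (L : Idx m -> B -> R) (y : Idx m -> {t : R | Y t}) (lam : R) (f g : B) :
  feasible L (fun i => L i f) g ->
  reg_obj E Omega L y lam g = reg_obj E Omega L y lam f + lam * (Omega g - Omega f).
Proof.
  intros Hg. unfold reg_obj.
  replace (fun i => L i g) with (fun i => L i f).
  - ring.
  - apply functional_extensionality. intro i. symmetry. apply Hg.
Qed.

Lemma reg_obj_le_of_interpolant {B : RBanach} {m : nat} {Y : R -> Prop}
    (E : (Idx m -> R) -> (Idx m -> {t : R | Y t}) -> R) (Omega : B -> R)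
    (L : Idx m -> B -> R) (y : Idx m -> {t : R | Y t}) (lam e : R) (fs f0 : B) :
  0 <= lam ->
  feasible L (fun i => L i fs) f0 ->
  Omega f0 <= Omega fs + e ->
  reg_obj E Omega L y lam f0 <= reg_obj E Omega L y lam fs + lam * e.
Proof.
  intros Hlam Hf0 Hle.
  rewrite (reg_obj_feasible E Omega L y lam fs f0 Hf0).
  assert (lam * (Omega f0 - Omega fs) <= lam * e) by (apply Rmult_le_compat_l; lra).
  lra.
Qed.

Lemma dual_close_le {B : RBanach} {m : nat} (Lh : B -> R) (c : Idx m -> R)
    (L : Idx m -> B -> R) (e e' : R) :
  e <= e' -> dual_close Lh c L e -> dual_close Lh c L e'.
Proof.
  intros Hee' [r [Hr Hre]]. exists r. split; [exact Hr | lra].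
Qed.

Lemma small_tolerance (lam eps : R) :
  0 <= lam -> 0 < eps -> exists e, 0 < e /\ e <= eps /\ lam * e <= eps.
Proof.
  intros Hlam Heps. exists (eps / (lam + 1)).
  assert (Hq : eps / (lam + 1) * (lam + 1) = eps) by (field; lra).
  assert (0 < eps / (lam + 1)) by (apply Rdiv_lt_0_compat; lra).
  repeat split; nra.
Qed.

Theorem theoremC2 (B : RBanach) (m : nat) (Y : R -> Prop)
    (E : (Idx m -> R) -> (Idx m -> {t : R | Y t}) -> R) (Omega : B -> R)
    (Hmin : reg_attains B m Y E Omega)
    (Hadm : interp_admissible B Omega) :
  reg_admissible B m Y E Omega.
Proof.
  intros L y lam HL Hlam.
  destruct (Hmin L y lam HL Hlam) as [fs Hfs].
  assert (Hfs_feas : feasible L (fun i => L i fs) fs) by (intro i; reflexivity).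
  destruct (Hadm m L (fun i => L i fs) HL (ex_intro _ fs Hfs_feas)) as [Hprox Hnprox].
  split.
  - intros HZ. destruct (Hprox HZ) as [f0 [Hf0 [Hle HJ]]].
    exists f0. split; [| exact HJ].
    intro g.
    pose proof (reg_obj_le_of_interpolant E Omega L y lam 0 fs f0
                  ltac:(lra) Hf0 ltac:(specialize (Hle fs Hfs_feas); lra)).
    specialize (Hfs g). lra.
  - intros HZ eps Heps.
    destruct (small_tolerance lam eps) as [e [He [Heeps Hlameps]]]; try lra.
    destruct (Hnprox HZ e He) as [f0 [Hf0 [Hle [Lh [c [HJ Hclose]]]]]].
    exists f0. split.
    + intro g.
      pose proof (reg_obj_le_of_interpolant E Omega L y lam e fs f0
                    ltac:(lra) Hf0 (Hle fs Hfs_feas)).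
      specialize (Hfs g). lra.
    + exists Lh, c. split; [exact HJ |].
      exact (dual_close_le Lh c L e eps Heeps Hclose).
Qed.
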